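(* Let $\tau=(12)(34)(56)\in S_7$ acting on $D_7$ (variables $1,\dots,7$). Then $$\phi_9\big((12)(34)(56)(78)\big)=\#\{(a,b,d): a,d\in\Phi_7(\tau),\ b\in D_7,\ a\le b,\ b\vee \tau b\le d\},$$ where $\le$ and $\vee$ are the pointwise order and pointwise maximum of functions.
   Context: $B=\{0,1\}$ with $0\le1$; $B^n$ is ordered componentwise; $D_n$ is the set of monotone functions $B^n\to B$, ordered pointwise ($f\le g$ iff $f(x)\le g(x)$ for all $x$). $S_n$ acts on $D_n$ by $(\pi f)(x_1,\dots,x_n)=f(x_{\pi(1)},\dots,x_{\pi(n)})$. For $\pi\in S_n$, $\Phi_n(\pi)=\{f\in D_n:\pi f=f\}$ and $\phi_n(\pi)=|\Phi_n(\pi)|$. Here $(12)(34)(56)(78)\in S_9$ fixes variable $9$. *)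

From mathcomp Require Import all_boot all_fingroup.
Set Implicit Arguments. Unset Strict Implicit. Unset Printing Implicit Defensive.

(* B = bool with false <= true; B^n = {ffun 'I_n -> bool}; variables are
   indexed 0..n-1 (variable k of the paper is index k-1). *)
Definition Bn (n : nat) := {ffun 'I_n -> bool}.
Definition BF (n : nat) := {ffun Bn n -> bool}.

Definition leBn n (x y : Bn n) : bool := [forall i, x i ==> y i].
Definition leF n (f g : BF n) : bool := [forall x, f x ==> g x].
Definition joinF n (f g : BF n) : BF n := [ffun x => f x || g x].

Definition monotone n (f : BF n) : bool :=
  [forall x, forall y, leBn x y ==> (f x ==> f y)].

Definition permx n (pi : 'S_n) (x : Bn n) : Bn n := [ffun i => x (pi i)].
Definition actF n (pi : 'S_n) (f : BF n) : BF n := [ffun x => f (permx pi x)].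

Definition Phi n (pi : 'S_n) : {set BF n} :=
  [set f | monotone f & actF pi f == f].
Definition phi n (pi : 'S_n) : nat := #|Phi pi|.

Definition tau7 : 'S_7 :=
  (tperm (inord 0) (inord 1) * tperm (inord 2) (inord 3)
   * tperm (inord 4) (inord 5))%g.
Definition sigma9 : 'S_9 :=
  (tperm (inord 0) (inord 1) * tperm (inord 2) (inord 3)
   * tperm (inord 4) (inord 5) * tperm (inord 6) (inord 7))%g.

From mathcomp Require Import all_boot all_fingroup.
Set Implicit Arguments. Unset Strict Implicit. Unset Printing Implicit Defensive.

(* Write a point of B^9 as (x, u, v) with u, v the values of variables 7, 8
   and x in B^7 the remaining variables.  Then sigma acts as
   (x, u, v) |-> (tau x, v, u) with tau = (12)(34)(56) in S_7.  A function f
   on B^9 is determined by its four slices f(., u, v); if f is sigma-fixed,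
   f(., 0, 1) = tau f(., 1, 0), so f is determined by the triple
     a = f(., 0, 0),  b = f(., 1, 0),  d = f(., 1, 1),
   and f is monotone and sigma-fixed iff a, d are tau-fixed monotone
   functions, b is monotone, a <= b and b \/ tau b <= d. *)

Lemma monotoneP n (f : BF n) :
  reflect (forall x y, leBn x y -> f x -> f y) (monotone f).
Proof.
apply: (iffP forallP); [move=> H x y le_xy | move=> H x].
  by move/forallP/(_ y)/implyP/(_ le_xy)/implyP: (H x).
by apply/forallP => y; apply/implyP => le_xy; apply/implyP; apply: H.
Qed.

Lemma leFP n (f g : BF n) : reflect (forall x, f x -> g x) (leF f g).
Proof.
apply: (iffP forallP) => H x; first exact/implyP.
by apply/implyP/H.
Qed.

Lemma PhiP n (p : 'S_n) (f : BF n) :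
  reflect (monotone f /\ forall x, f (permx p x) = f x) (f \in Phi p).
Proof.
rewrite inE; apply: (iffP andP).
  by move=> [mono_f /eqP fix_f]; split=> // x; rewrite -{2}fix_f ffunE.
move=> [mono_f fix_f]; split=> //.
by apply/eqP/ffunP => x; rewrite ffunE fix_f.
Qed.

Lemma leBn_refl n (x : Bn n) : leBn x x.
Proof. by apply/forallP => i; apply/implyP. Qed.

Lemma leBn_permx n (p : 'S_n) (x y : Bn n) :
  leBn x y -> leBn (permx p x) (permx p y).
Proof. by move/forallP=> le_xy; apply/forallP => i; rewrite !ffunE. Qed.

Lemma permxM n (p q : 'S_n) (x : Bn n) :
  permx p (permx q x) = permx (p * q)%g x.
Proof. by apply/ffunP => i; rewrite !ffunE permM. Qed.

Lemma permx1 n (x : Bn n) : permx 1%g x = x.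
Proof. by apply/ffunP => i; rewrite !ffunE perm1. Qed.

Lemma monotone_actF n (p : 'S_n) (f : BF n) :
  monotone f -> monotone (actF p f).
Proof.
move/monotoneP=> mono_f; apply/monotoneP => x y le_xy; rewrite !ffunE.
by apply: mono_f; apply: leBn_permx.
Qed.

Section Splitting.

Variables (m n : nat) (sigma : 'S_m) (tau : 'S_n).
Hypothesis tau_involutive : (tau * tau = 1)%g.

Variables (ext : Bn n -> bool -> bool -> Bn m) (restr : Bn m -> Bn n).
Variables (iu iv : 'I_m).
Hypothesis ext_restr : forall y, ext (restr y) (y iu) (y iv) = y.
Hypothesis restr_ext : forall x u v, restr (ext x u v) = x.
Hypothesis ext_iu : forall x u v, ext x u v iu = u.
Hypothesis ext_iv : forall x u v, ext x u v iv = v.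
Hypothesis leBn_ext : forall x x' u u' v v',
  leBn x x' -> (u ==> u') -> (v ==> v') -> leBn (ext x u v) (ext x' u' v').
Hypothesis leBn_restr : forall y y', leBn y y' -> leBn (restr y) (restr y').

Hypothesis permx_ext : forall x u v,
  permx sigma (ext x u v) = ext (permx tau x) v u.

Lemma permx_tauK (x : Bn n) : permx tau (permx tau x) = x.
Proof. by rewrite permxM tau_involutive permx1. Qed.

Lemma ext_ind (P : Bn m -> Prop) :
  (forall x u v, P (ext x u v)) -> forall y, P y.
Proof. by move=> P_ext y; rewrite -(ext_restr y). Qed.

Definition admissible : {set BF n * BF n * BF n} :=
  [set abd : BF n * BF n * BF n |
      let: (a, b, d) := abd in
      [&& a \in Phi tau, d \in Phi tau, monotone b,
          leF a b & leF (joinF b (actF tau b)) d]].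

Definition slice (f : BF m) (u v : bool) : BF n := [ffun x => f (ext x u v)].

Definition slices (f : BF m) : BF n * BF n * BF n :=
  (slice f false false, slice f true false, slice f true true).

(* The slice (u, v) of the function glued from (a, b, d); the slice (0, 1)
   is forced to be tau b by sigma-invariance. *)
Definition glue_slice (a b d : BF n) (u v : bool) : BF n :=
  if u then (if v then d else b) else (if v then actF tau b else a).

Definition glue (abd : BF n * BF n * BF n) : BF m :=
  let: (a, b, d) := abd in
  [ffun y : Bn m => glue_slice a b d (y iu) (y iv) (restr y)].

Lemma glueE a b d x u v : glue (a, b, d) (ext x u v) = glue_slice a b d u v x.
Proof. by rewrite ffunE ext_iu ext_iv restr_ext. Qed.

Lemma slices_glue abd : slices (glue abd) = abd.
Proof.
by case: abd => [[a b] d]; congr (_, _, _); apply/ffunP => x; rewrite ffunE glueE.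
Qed.

(* A sigma-fixed function is recovered from its slices; in particular
   its (0, 1)-slice is tau applied to its (1, 0)-slice. *)
Lemma glue_slices f : f \in Phi sigma -> glue (slices f) = f.
Proof.
case/PhiP=> _ fix_f; apply/ffunP; apply: ext_ind => x u v.
rewrite glueE; case: u; case: v; rewrite /glue_slice !ffunE //.
by rewrite -permx_ext fix_f.
Qed.

Lemma monotone_slice f u v : monotone f -> monotone (slice f u v).
Proof.
move/monotoneP=> mono_f; apply/monotoneP => x y le_xy; rewrite !ffunE.
by apply: mono_f; apply: leBn_ext => //; apply/implyP.
Qed.

Lemma le_slice f u u' v v' : monotone f -> (u ==> u') -> (v ==> v') ->
  leF (slice f u v) (slice f u' v').
Proof.
move/monotoneP=> mono_f le_u le_v; apply/leFP => x; rewrite !ffunE.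
by apply: mono_f; apply: leBn_ext => //; apply: leBn_refl.
Qed.

(* The slices of a sigma-fixed monotone function form an admissible triple;
   its diagonal slices are tau-fixed since sigma fixes u = v. *)
Lemma slices_admissible f : f \in Phi sigma -> slices f \in admissible.
Proof.
move=> Phi_f; have /PhiP [mono_f fix_f] := Phi_f.
have diag_fixed u : slice f u u \in Phi tau.
  apply/PhiP; split=> [|x]; first exact: monotone_slice.
  by rewrite !ffunE -permx_ext fix_f.
rewrite inE /slices /=; apply/and5P; split=> //.
- exact: monotone_slice.
- exact: le_slice.
have /leFP le_10_11 : leF (slice f true false) (slice f true true).
  exact: le_slice.
have /leFP le_01_11 : leF (slice f false true) (slice f true true).
  exact: le_slice.
apply/leFP => x; rewrite ffunE => /orP [/le_10_11 // | tau_b_x].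
by apply: le_01_11; move: tau_b_x; rewrite !ffunE -permx_ext fix_f.
Qed.

Lemma le_glue_slice a b d u u' v v' x : (a, b, d) \in admissible ->
  (u ==> u') -> (v ==> v') -> glue_slice a b d u v x -> glue_slice a b d u' v' x.
Proof.
rewrite inE => /and5P [/PhiP [_ fix_a] _ _ /leFP le_ab /leFP le_bd].
have le_a_taub y : a y -> actF tau b y.
  by rewrite ffunE -{1}fix_a; apply: le_ab.
have le_b_d y : b y -> d y by move=> by_; apply: le_bd; rewrite ffunE by_.
have le_taub_d y : actF tau b y -> d y.
  by move=> by_; apply: le_bd; rewrite ffunE by_ orbT.
case: u; case: u'; case: v; case: v' => //= _ _;
  by [move/le_b_d | move/le_taub_d | move/le_ab | move/le_a_taub | move/le_ab/le_b_d].
Qed.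

(* Conversely, an admissible triple glues to a sigma-fixed monotone
   function: monotone along x by the slices, along (u, v) by
   le_glue_slice, and sigma-fixed since a, d are tau-fixed and tau
   is an involution. *)
Lemma glue_Phi abd : abd \in admissible -> glue abd \in Phi sigma.
Proof.
case: abd => [[a b] d] adm; have := adm.
rewrite inE => /and5P [/PhiP [mono_a fix_a] /PhiP [mono_d fix_d] mono_b _ _].
have mono_slice u v : monotone (glue_slice a b d u v).
  by case: u; case: v => //; apply: monotone_actF.
apply/PhiP; split.
  apply/monotoneP => y y' le_yy'; rewrite !ffunE => glue_y.
  have /forallP le_coord := le_yy'.
  apply: le_glue_slice adm (le_coord iu) (le_coord iv) _.
  by apply/monotoneP: glue_y; [apply: mono_slice | apply: leBn_restr].
apply: ext_ind => x u v.
rewrite permx_ext !glueE /glue_slice.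
by case: u; case: v; rewrite ?ffunE ?permx_tauK ?fix_a ?fix_d.
Qed.

(* The counting statement: slices is a bijection from Phi sigma onto the
   admissible triples, with inverse glue. *)
Theorem card_Phi_split : #|Phi sigma| = #|admissible|.
Proof.
rewrite -(card_in_imset (can_in_inj glue_slices)).
congr #|pred_of_set _|; apply/setP => abd; apply/imsetP/idP => [[f Phi_f ->] | adm].
  exact: slices_admissible.
by exists (glue abd); [apply: glue_Phi | rewrite slices_glue].
Qed.

End Splitting.

(* The concrete splitting of B^9: variables 7 and 8 (indices 6 and 7) are
   split off, and the remaining variables 1..6, 9 form a point of B^7. *)

Lemma inordE k n (lt_k_n : k < n.+1) : inord k = Ordinal lt_k_n.
Proof. by apply/val_inj; rewrite /= inordK. Qed.

Definition sigma9_nat (i : nat) : nat :=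
  match i with
  | 0 => 1 | 1 => 0 | 2 => 3 | 3 => 2 | 4 => 5 | 5 => 4 | 6 => 7 | 7 => 6
  | k => k end.
Definition tau7_nat (i : nat) : nat :=
  match i with 0 => 1 | 1 => 0 | 2 => 3 | 3 => 2 | 4 => 5 | 5 => 4 | k => k end.

Lemma sigma9E (i : 'I_9) : sigma9 i = sigma9_nat i :> nat.
Proof.
rewrite /sigma9 !permM !permE /=.
rewrite (@inordE 0 8 isT) (@inordE 1 8 isT) (@inordE 2 8 isT) (@inordE 3 8 isT)
  (@inordE 4 8 isT) (@inordE 5 8 isT) (@inordE 6 8 isT) (@inordE 7 8 isT).
by case: i => [[|[|[|[|[|[|[|[|[|//]]]]]]]]] ?].
Qed.

Lemma tau7E (i : 'I_7) : tau7 i = tau7_nat i :> nat.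
Proof.
rewrite /tau7 !permM !permE /=.
rewrite (@inordE 0 6 isT) (@inordE 1 6 isT) (@inordE 2 6 isT) (@inordE 3 6 isT)
  (@inordE 4 6 isT) (@inordE 5 6 isT).
by case: i => [[|[|[|[|[|[|[|//]]]]]]] ?].
Qed.

Lemma tau7_involutive : (tau7 * tau7 = 1)%g.
Proof.
apply/permP => i; apply/val_inj; rewrite permM perm1 /= !tau7E.
by case: i => [[|[|[|[|[|[|[|//]]]]]]] ?].
Qed.

Definition ext7 (x : Bn 7) (u v : bool) : Bn 9 :=
  [ffun i : 'I_9 => if i < 6 then x (inord i)
                    else if i == 6 :> nat then u
                    else if i == 7 :> nat then v else x (inord 6)].

Definition restr9 (y : Bn 9) : Bn 7 :=
  [ffun i : 'I_7 => if i < 6 then y (inord i) else y (inord 8)].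

Lemma ext7_restr9 (y : Bn 9) : ext7 (restr9 y) (y (inord 6)) (y (inord 7)) = y.
Proof.
apply/ffunP => i; rewrite !ffunE.
case: i => [[|[|[|[|[|[|[|[|[|//]]]]]]]]] ?]; rewrite /= ?ffunE /= ?inordK //=;
  by congr (y _); apply/val_inj; rewrite /= inordK.
Qed.

Lemma restr9_ext7 x u v : restr9 (ext7 x u v) = x.
Proof.
apply/ffunP => i; rewrite !ffunE.
case: i => [[|[|[|[|[|[|[|//]]]]]]] ?]; rewrite /= ?ffunE /= ?inordK //=;
  by congr (x _); apply/val_inj; rewrite /= inordK.
Qed.

Lemma ext7_6 x u v : ext7 x u v (inord 6) = u.
Proof. by rewrite ffunE /= !inordK. Qed.

Lemma ext7_7 x u v : ext7 x u v (inord 7) = v.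
Proof. by rewrite ffunE /= !inordK. Qed.

Lemma leBn_ext7 x x' u u' v v' :
  leBn x x' -> (u ==> u') -> (v ==> v') -> leBn (ext7 x u v) (ext7 x' u' v').
Proof.
move/forallP=> le_x le_u le_v; apply/forallP => i; rewrite !ffunE.
by case: ifP => _; [|case: ifP => _; [|case: ifP]].
Qed.

Lemma leBn_restr9 y y' : leBn y y' -> leBn (restr9 y) (restr9 y').
Proof. by move/forallP=> le_y; apply/forallP => i; rewrite !ffunE; case: ifP. Qed.

Lemma permx_ext7 x u v : permx sigma9 (ext7 x u v) = ext7 (permx tau7 x) v u.
Proof.
apply/ffunP => i; rewrite !ffunE sigma9E.
case: i => [[|[|[|[|[|[|[|[|[|//]]]]]]]]] ?]; rewrite /= ?inordK //= ?ffunE;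
  by congr (x _); apply/val_inj; rewrite /= ?tau7E ?inordK.
Qed.

Theorem mainTheorem2 :
  phi sigma9 =
  #|[set abd : BF 7 * BF 7 * BF 7 |
      let: (a, b, d) := abd in
      [&& a \in Phi tau7, d \in Phi tau7, monotone b,
          leF a b & leF (joinF b (actF tau7 b)) d]]|.
Proof.
exact: (card_Phi_split tau7_involutive ext7_restr9 restr9_ext7 ext7_6 ext7_7
          leBn_ext7 leBn_restr9 permx_ext7).
Qed.
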